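(* Let $a$ and $b$ be coprime odd integers and let $\beta$ be a non-negative integer. Then $EG_{(a,b)}(\beta)\neq\emptyset$ if and only if $\beta\in\{0,1\}$; equivalently, $EG_{(a,b)}(\beta)=\emptyset$ if and only if $\beta\geq 2$.
   Context: For coprime nonzero integers $a,b$ and an integer $\beta\geq0$, $EG_{(a,b)}(\beta)$ is the set of positive integers $d$ such that $2^\beta d\mid(a^k+b^k)$ for some even integer $k\geq 2$. *)

From mathcomp Require Import all_boot all_order all_algebra.
Set Implicit Arguments. Unset Strict Implicit. Unset Printing Implicit Defensive.
Import Order.TTheory GRing.Theory Num.Theory.
Local Open Scope ring_scope.

Definition EG (a b : int) (beta : nat) : nat -> Prop :=
  fun d => (0 < d)%N /\
    exists k : nat, [/\ (2 <= k)%N, ~~ odd k &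
      ((2 ^ beta * d)%:Z %| a ^+ k + b ^+ k)%Z].

(* An odd square is 1 mod 4, so for odd a, b and even k the sum a^k + b^k is
   2 mod 4: it is always even but never divisible by 4.  Hence 2^beta * d can
   divide it only when beta <= 1, and then d = 1, k = 2 is a witness. *)

From mathcomp Require Import all_boot all_order all_algebra.
From mathcomp Require Import ring.
Set Implicit Arguments. Unset Strict Implicit. Unset Printing Implicit Defensive.
Import Order.TTheory GRing.Theory Num.Theory.
Local Open Scope ring_scope.

Lemma exprz_even_abs (a : int) (k : nat) : ~~ odd k -> a ^+ k = (`|a| ^ k)%N%:Z.
Proof. by move=> ek; rewrite -abszX gez0_abs // exprn_even_ge0. Qed.

Lemma ndvd2z_odd_abs (a : int) : ~~ (2 %| a)%Z -> odd `|a|%N.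
Proof. by rewrite -[odd _]negbK -dvdn2. Qed.

Lemma odd_expn_even_mod4 (x k : nat) : odd x -> ~~ odd k -> (x ^ k = 1 %[mod 4])%N.
Proof.
move=> ox ek; rewrite -[k](odd_double_half k) (negbTE ek) add0n.
rewrite -[x](odd_double_half x) ox; set m := x./2.
have -> : ((1 + m.*2) ^ k./2.*2 = (4 * (m * m + m) + 1) ^ k./2)%N.
  by rewrite -[k./2.*2]mul2n expnM; congr (_ ^ _)%N; rewrite -mul2n; ring.
by rewrite -modnXm [(4 * _)%N]mulnC modnMDl modn_small // exp1n.
Qed.

Lemma dvd2_odd_powerD (x y k : nat) : odd x -> odd y -> (2 %| x ^ k + y ^ k)%N.
Proof. by move=> ox oy; rewrite dvdn2 oddD !oddX ox oy !orbT. Qed.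

Lemma not_dvd4_odd_even_powerD (x y k : nat) :
  odd x -> odd y -> ~~ odd k -> ~~ (4 %| x ^ k + y ^ k)%N.
Proof. by move=> ox oy ek; rewrite /dvdn -modnDm !odd_expn_even_mod4. Qed.

Section OddBase.

Variables (a b : int).
Hypotheses (oa : odd `|a|%N) (ob : odd `|b|%N).

Lemma dvdz_even_powerD_abs beta d k : ~~ odd k ->
  ((2 ^ beta * d)%:Z %| a ^+ k + b ^+ k)%Z = (2 ^ beta * d %| `|a| ^ k + `|b| ^ k)%N.
Proof. by move=> ek; rewrite !exprz_even_abs // -PoszD. Qed.

Lemma EG_exponent_le1 beta d : EG a b beta d -> (beta <= 1)%N.
Proof.
case=> _ [k [_ ek]]; rewrite dvdz_even_powerD_abs // leqNgt; apply: contraL => beta_ge2.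
have dvd4 : (4 %| 2 ^ beta * d)%N by rewrite dvdn_mulr // (dvdn_exp2l 2 beta_ge2).
exact: contraNN (dvdn_trans dvd4) (not_dvd4_odd_even_powerD oa ob ek).
Qed.

Lemma EG_one beta : (beta <= 1)%N -> EG a b beta 1.
Proof.
move=> beta_le1; split=> //; exists 2%N; split=> //.
rewrite dvdz_even_powerD_abs // muln1 (dvdn_trans _ (dvd2_odd_powerD 2 oa ob)) //.
by case: beta beta_le1 => [|[]].
Qed.

End OddBase.

Theorem theorem2p20 (a b : int) (beta : nat) :
  coprimez a b -> ~~ (2 %| a)%Z -> ~~ (2 %| b)%Z ->
  ((exists d : nat, EG a b beta d) <-> (beta <= 1)%N).
Proof.
move=> _ /ndvd2z_odd_abs oa /ndvd2z_odd_abs ob; split=> [[d] | beta_le1].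
- exact: EG_exponent_le1.
- by exists 1%N; apply: EG_one.
Qed.
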